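(* Let $I=(m_1,\dots,m_k,T_1,\dots,T_n)$ be an instance of the VSPA problem with $0<m_1\le m_2\le\dots\le m_k$, $n=\sum_r m_r$, $T_i\in\{H,L\}$ for all $i$ where $0\le H<L$, and $T_1=L$, and let $g$ be a nondecreasing function. Then for every valid decision sequence $\mathbf{x}=(x_1,\dots,x_n)$ with $x_1>1$ there exists a valid decision sequence $\mathbf{x}^*=(1,x^*_2,\dots,x^*_n)$ with $\mathrm{COST}_I(\mathbf{x}^* )\le\mathrm{COST}_I(\mathbf{x})$.
   Context: Variable-Sized Positional Allocation (VSPA) problem: an instance consists of capacities $m_1,\dots,m_k$ (positive integers) and intrinsic task costs $T_1,\dots,T_n\ge 0$ with $n=\sum_r m_r$, together with a nondecreasing function $g:\mathbb{N}\to\mathbb{R}_{\ge0}$ (in the original problem $g(q)=f(m+1-q)$ for a nonincreasing positional function $f$). A decision sequence $\mathbf{x}\in[k]^n$ assigns task $t$ to agent $x_t$; it is valid if each agent $r$ receives exactly $m_r$ tasks. When task $t$ is assigned, agent $x_t$ has remaining capacity $q_t=m_{x_t}-|\{s<t: x_s=x_t\}|$, and the assignment costs $g(q_t)\cdot T_t$. The total cost is $\mathrm{COST}_I(\mathbf{x})=\sum_{t=1}^n g(q_t)\,T_t$. *)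

From HB Require Import structures.
From mathcomp Require Import all_boot all_order all_algebra.
Set Implicit Arguments. Unset Strict Implicit. Unset Printing Implicit Defensive.
Import Order.TTheory GRing.Theory Num.Theory.
Local Open Scope ring_scope.

(* Agents are numbered 1..k; capacities are given by m : nat -> nat
   (only m 1, ..., m k are relevant). Tasks are numbered 1..n but stored
   0-based: task t (1-based) has intrinsic cost T (t-1), and a decision
   sequence x : seq nat has x`_(t-1) = x_t. *)

Definition vspa_n (k : nat) (m : nat -> nat) : nat :=
  (\sum_(1 <= r < k.+1) m r)%N.

Definition vspa_valid (k : nat) (m : nat -> nat) (x : seq nat) : Prop :=
  [/\ size x = vspa_n k m,
      all (fun r => (1 <= r <= k)%N) x &
      forall r, (1 <= r <= k)%N -> count_mem r x = m r].

Definition vspa_q (m : nat -> nat) (x : seq nat) (t : nat) : nat :=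
  (m (nth 0%N x t) - count_mem (nth 0%N x t) (take t x))%N.

Definition vspa_cost (R : realFieldType) (m : nat -> nat) (T : nat -> R)
    (g : nat -> R) (x : seq nat) : R :=
  \sum_(t < size x) g (vspa_q m x t) * T t.

From HB Require Import structures.
From mathcomp Require Import all_boot all_order all_algebra.
From mathcomp Require Import lra zify.
Import Order.TTheory GRing.Theory Num.Theory.
Local Open Scope ring_scope.
Set Implicit Arguments. Unset Strict Implicit.

(* Let a <> 1 be the agent of the first task, and split x = a :: u ++ 1 :: w
   at the first task of agent 1.  If agent 1 has at most as many tasks as a
   in w, exchanging these two tasks moves the maximal cost T_1 = L to a
   smaller multiplier, while the multipliers of the a-tasks of u each go up
   by one step of g; these steps telescope and are paid for by the gain at
   the head.  Otherwise, as m_1 <= m_a, some task of agent a in a :: u starts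
   a suffix in which 1 and a occur equally often; exchanging the labels 1 and
   a in that suffix preserves validity and cost, and the result either starts
   with 1 or is in the first case. *)

Definition swap_label (a b r : nat) : nat :=
  if r == a then b else if r == b then a else r.

Lemma swap_labelK a b : involutive (swap_label a b).
Proof.
move=> r; rewrite /swap_label.
case: (eqVneq r a) => [->|ra]; first by case: (eqVneq b a) => [->|]; rewrite ?eqxx.
case: (eqVneq r b) => [->|rb]; first by rewrite eqxx.
by rewrite (negbTE ra) (negbTE rb).
Qed.

Lemma swap_label_l a b : swap_label a b a = b.
Proof. by rewrite /swap_label eqxx. Qed.

Lemma swap_label_r a b : swap_label a b b = a.
Proof. by rewrite /swap_label eqxx; case: eqP. Qed.

Lemma count_mem_map_swap_label a b r s :
  count_mem r (map (swap_label a b) s) = count_mem (swap_label a b r) s.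
Proof.
rewrite count_map; apply: eq_count => y /=.
exact: can2_eq (swap_labelK a b) (swap_labelK a b) y r.
Qed.

Lemma count_mem_swap_label a b r s : count_mem a s = count_mem b s ->
  count_mem (swap_label a b r) s = count_mem r s.
Proof.
rewrite /swap_label => eq_ab.
by case: (eqVneq r a) => [->|_]; last case: (eqVneq r b) => [->|].
Qed.

Lemma perm_map_swap_label a b s : count_mem a s = count_mem b s ->
  perm_eq (map (swap_label a b) s) s.
Proof.
move=> eq_ab; apply/allP => r _ /=.
by rewrite count_mem_map_swap_label count_mem_swap_label.
Qed.

Lemma perm_swap_pivots (a b : nat) u w : perm_eq (b :: u ++ a :: w) (a :: u ++ b :: w).
Proof.
apply/allP => r _ /=; rewrite !count_cat /=.
by rewrite addnCA [X in _ == X]addnCA (addnCA (b == r)).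
Qed.

Lemma split_first_mem (b : nat) s : b \in s ->
  exists u w, s = u ++ b :: w /\ b \notin u.
Proof.
elim: s => [|c s IHs] //; rewrite in_cons; case: (eqVneq b c) => [->|bc] /= b_s.
  by exists [::], s.
have [u [w [-> b_u]]] := IHs b_s.
by exists (c :: u), w; rewrite in_cons negb_or bc.
Qed.

Lemma split_count_mem (a : nat) s n : (n < count_mem a s)%N ->
  exists s1 s2, s = s1 ++ a :: s2 /\ count_mem a s2 = n.
Proof.
elim: s => [|c s IHs] //=; case: (ltnP n (count_mem a s)) => [lt_n|le_n] lt_n_c.
  by have [s1 [s2 [-> cnt]]] := IHs lt_n; exists (c :: s1), s2.
case: eqVneq lt_n_c => [->|_] /=; last by rewrite add0n ltnNge le_n.
rewrite add1n ltnS => ge_n; exists [::], s; split => //.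
by apply/eqP; rewrite eqn_leq le_n.
Qed.

Lemma vspa_valid_perm k m x y : perm_eq x y -> vspa_valid k m y -> vspa_valid k m x.
Proof.
move=> pxy [size_y all_y count_y]; split.
- by rewrite (perm_size pxy).
- by rewrite (perm_all _ pxy).
- by move=> r r_k; rewrite (permP pxy) count_y.
Qed.

Section SuffixCost.

Variables (R : realFieldType) (T g : nat -> R).

(* Cost of performing [s] from position [o] on, each agent's remaining
   capacity being its number of occurrences in what is left of [s]; this
   is exactly the situation of a valid decision sequence. *)
Fixpoint suffix_cost (s : seq nat) (o : nat) : R :=
  if s is c :: s' then g (count_mem c s) * T o + suffix_cost s' o.+1 else 0.

Lemma suffix_costE s o : suffix_cost s o =
  \sum_(t < size s) g (count_mem (nth 0%N s t) (drop t s)) * T (o + t)%N.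
Proof.
elim: s o => [|c s IHs] o /=; first by rewrite big_ord0.
rewrite big_ord_recl /= addn0 IHs; congr (_ + _).
by apply: eq_bigr => t _; rewrite addSnnS.
Qed.

Lemma vspa_cost_suffix k m x :
  vspa_valid k m x -> vspa_cost m T g x = suffix_cost x 0.
Proof.
case=> _ all_x count_x; rewrite suffix_costE; apply: eq_bigr => t _.
rewrite add0n /vspa_q; congr (g _ * _).
have x_t : (1 <= nth 0%N x t <= k)%N := all_nthP 0%N all_x t (ltn_ord t).
rewrite -(count_x _ x_t).
have := count_cat (pred1 (nth 0%N x t)) (take t x) (drop t x).
by rewrite cat_take_drop => ->; rewrite addKn.
Qed.

Lemma suffix_cost_map_swap_label a b s o :
  suffix_cost (map (swap_label a b) s) o = suffix_cost s o.
Proof.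
elim: s o => [|c s IHs] o //=; rewrite IHs.
by rewrite !eqxx count_mem_map_swap_label swap_labelK.
Qed.

Lemma suffix_cost_swap_label a b s1 s2 o : count_mem a s2 = count_mem b s2 ->
  suffix_cost (s1 ++ map (swap_label a b) s2) o = suffix_cost (s1 ++ s2) o.
Proof.
move=> eq_ab; elim: s1 o => [|c s1 IHs1] o /=; first exact: suffix_cost_map_swap_label.
by rewrite IHs1 !count_cat count_mem_map_swap_label count_mem_swap_label.
Qed.

Lemma suffix_cost_relabel_pivot (a b : nat) s1 z w o : a != b -> b \notin z ->
  (count_mem a z + count_mem a w)%N = count_mem b w ->
  exists w2, [/\ perm_eq (s1 ++ b :: w2) (s1 ++ a :: z ++ b :: w),
    suffix_cost (s1 ++ b :: w2) o = suffix_cost (s1 ++ a :: z ++ b :: w) o &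
    (count_mem b w2 < count_mem a w2)%N].
Proof.
move=> neq_ab b_z count_azw; set sw := swap_label a b.
have bal : count_mem a (a :: z ++ b :: w) = count_mem b (a :: z ++ b :: w).
  rewrite /= !count_cat /= !eqxx (count_memPn b_z) (negbTE neq_ab).
  by rewrite eq_sym (negbTE neq_ab) add0n -count_azw addnA.
have relabel : map sw (a :: z ++ b :: w) = b :: map sw z ++ a :: map sw w.
  by rewrite /= map_cat /= /sw swap_label_l swap_label_r.
exists (map sw z ++ a :: map sw w); split.
- by rewrite perm_cat2l -relabel perm_map_swap_label.
- by rewrite -relabel suffix_cost_swap_label.
rewrite !count_cat /= !count_mem_map_swap_label /sw swap_label_l swap_label_r.
by rewrite (count_memPn b_z) (negbTE neq_ab) eqxx count_azw add0n.
Qed.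

End SuffixCost.

Section Exchange.

Variables (R : realFieldType) (T g : nat -> R).
Hypothesis g_mono : forall p q, (p <= q)%N -> g p <= g q.
Variables (a b : nat) (w : seq nat).
Hypotheses (neq_ab : a != b) (count_w : (count_mem b w <= count_mem a w)%N).

(* Trading the pivot b for a raises the multiplier of each a-task of [u] by
   one step of g; as T <= L these steps telescope to the last term. *)
Lemma suffix_cost_pivot_le (L : R) u o : b \notin u ->
  (forall i, (i <= o + size u)%N -> T i <= L) ->
  suffix_cost T g (u ++ a :: w) o <= suffix_cost T g (u ++ b :: w) o +
    L * (g (count_mem a u + count_mem a w).+1 - g (count_mem b w).+1).
Proof.
elim: u o => [|c u IHu] o /=.
  rewrite !eqxx => _ /(_ o); rewrite addn0 leqnn => /(_ isT) T_o.
  have := g_mono (count_w : (count_mem b w).+1 <= (count_mem a w).+1)%N.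
  set gb := g _; set ga := g _; set C := suffix_cost _ _ _ _ => gb_ga.
  have : 0 <= (ga - gb) * (L - T o) by apply: mulr_ge0; lra.
  lra.
rewrite in_cons negb_or => /andP[neq_bc b_u] T_le.
have := IHu o.+1 b_u; rewrite addSnnS => /(_ T_le).
have T_o : T o <= L by apply: T_le; rewrite leq_addr.
rewrite !count_cat /= (negbTE neq_bc) add0n.
case: (eqVneq c a) => [->|neq_ca] /=; last by rewrite !add0n; lra.
rewrite eqxx !add1n addnS addSn.
have := g_mono (leqnSn (count_mem a u + count_mem a w).+1).
set K := (count_mem a u + count_mem a w).+1.
set gK1 := g K.+1; set gK := g K; set gb := g _.
set C1 := suffix_cost _ _ _ _; set C2 := suffix_cost _ _ _ _ => gK_gK1 IH.
have : 0 <= (gK1 - gK) * (L - T o) by apply: mulr_ge0; lra.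
lra.
Qed.

Lemma suffix_cost_swap_pivots u : b \notin u ->
  (forall i, (i <= (size u).+1)%N -> T i <= T 0%N) ->
  suffix_cost T g (b :: u ++ a :: w) 0 <= suffix_cost T g (a :: u ++ b :: w) 0.
Proof.
move=> b_u T_le; have := suffix_cost_pivot_le (o := 1) b_u T_le.
rewrite /= !count_cat /= !eqxx (count_memPn b_u) (negbTE neq_ab) eq_sym (negbTE neq_ab).
rewrite !add0n add1n -addSn.
set C1 := suffix_cost _ _ _ _; set C2 := suffix_cost _ _ _ _.
lra.
Qed.

End Exchange.

Section HeadExchange.

Variables (R : realFieldType) (T g : nat -> R).
Hypothesis g_mono : forall p q, (p <= q)%N -> g p <= g q.

Lemma suffix_cost_head_exchange (a b : nat) y : a != b -> b \in y ->
  (count_mem b (a :: y) <= count_mem a (a :: y))%N ->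
  (forall i, (i < size (a :: y))%N -> T i <= T 0%N) ->
  exists ys, perm_eq (b :: ys) (a :: y) /\
             suffix_cost T g (b :: ys) 0 <= suffix_cost T g (a :: y) 0.
Proof.
move=> neq_ab /split_first_mem[u [w [-> b_u]]] le_ba T_le.
have [le_w | lt_w] := leqP (count_mem b w) (count_mem a w).
  exists (u ++ a :: w); split; first exact: perm_swap_pivots.
  apply: (suffix_cost_swap_pivots g_mono neq_ab le_w b_u) => i le_i; apply: T_le.
  by apply: leq_ltn_trans le_i _; rewrite /= size_cat /=; lia.
have : (count_mem b w - count_mem a w < count_mem a (a :: u))%N.
  move: le_ba; rewrite /= !count_cat /= !eqxx (count_memPn b_u) (negbTE neq_ab).
  by rewrite eq_sym (negbTE neq_ab) /= !add0n !add1n; lia.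
case/split_count_mem => u1 [z [eq_u count_z]].
have : b \notin a :: u by rewrite in_cons eq_sym (negbTE neq_ab).
rewrite eq_u mem_cat in_cons !negb_or => /and3P[b_u1 _ b_z].
have count_azw : (count_mem a z + count_mem a w)%N = count_mem b w.
  by rewrite count_z subnK // ltnW.
have [w2 [perm_x cost_x lt_w2]] :=
  suffix_cost_relabel_pivot T g u1 0 neq_ab b_z count_azw.
rewrite -cat_cons eq_u -catA.
case: u1 eq_u b_u1 perm_x cost_x => [|c u1] eq_u b_u1 perm_x cost_x.
  by exists w2; rewrite cost_x.
case: eq_u => <- eq_u in perm_x cost_x *; move: b_u1; rewrite in_cons => /norP[_ b_u1].
exists (u1 ++ a :: w2); split; first exact: perm_trans (perm_swap_pivots _ _ _ _) perm_x.
rewrite -cost_x; apply: (suffix_cost_swap_pivots g_mono neq_ab (ltnW lt_w2) b_u1).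
move=> i le_i; apply: T_le; apply: leq_ltn_trans le_i _.
by rewrite eq_u /= !size_cat /=; lia.
Qed.

End HeadExchange.

Theorem lemma6 (R : realFieldType) (k : nat) (m : nat -> nat)
    (T : nat -> R) (H L : R) (g : nat -> R)
    (hm_pos : (0 < m 1)%N)
    (hm_sorted : forall r s, (1 <= r)%N -> (r <= s)%N -> (s <= k)%N -> (m r <= m s)%N)
    (hH : 0 <= H) (hHL : H < L)
    (hT : forall i, (i < vspa_n k m)%N -> T i = H \/ T i = L)
    (hT1 : T 0%N = L)
    (hg_nonneg : forall q, 0 <= g q)
    (hg_mono : forall p q, (p <= q)%N -> g p <= g q)
    (x : seq nat) (hx : vspa_valid k m x) (hx1 : (1 < nth 0%N x 0)%N) :
  exists xs : seq nat,
    [/\ vspa_valid k m xs, nth 0%N xs 0 = 1%N &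
        vspa_cost m T g xs <= vspa_cost m T g x].
Proof.
case: x hx hx1 => [|a y] hx //= lt_1a.
have [size_x all_x count_x] := hx.
have range_a : (1 <= a <= k)%N by case/andP: all_x.
have le_ak : (a <= k)%N by case/andP: range_a.
have neq_a1 : a != 1%N by rewrite gtn_eqF.
have range_1 : (1 <= 1 <= k)%N by rewrite /= (leq_trans (ltnW lt_1a) le_ak).
have le_m1a : (m 1 <= m a)%N := hm_sorted _ _ (leqnn 1) (ltnW lt_1a) le_ak.
have in_1 : 1%N \in y.
  move: hm_pos; rewrite -(count_x _ range_1) -has_count has_pred1 in_cons.
  by rewrite eq_sym (negbTE neq_a1) => ?.
have T_le : forall i, (i < size (a :: y))%N -> T i <= T 0%N.
  by move=> i; rewrite size_x hT1 => /hT[] ->; [exact: ltW hHL | exact: lexx].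
have [|ys [perm_ys cost_ys]] := suffix_cost_head_exchange hg_mono neq_a1 in_1 _ T_le.
  by rewrite (count_x _ range_1) (count_x _ range_a).
have valid_ys := vspa_valid_perm perm_ys hx.
exists (1%N :: ys); split => //.
by rewrite (vspa_cost_suffix _ _ valid_ys) (vspa_cost_suffix _ _ hx).
Qed.
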